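(* Let $A \in \mathbb{C}^{n \times n}$, and fix $A^-\in A\{1\}$ and $A^{GD}\in A\{GD\}$. Let $A^{GD1}=A^{GD}AA^{-}$. Then: (i) $A^{GD1}$ satisfies $AA^{GD1}A=A$ and $A^{GD1}AA^{GD1}=A^{GD1}$; (ii) $A^mA^{GD1} =A^mA^{-}$ and $A^{GD1}A^m = A^{GD}A^m$ for every positive integer $m$; (iii) $AA^{GD1}=P_{R(A),N(AA^{-})}$; (iv) $A^{GD1}A=P_{R(A^{GD}A),N(A)}$.
   Context: For $A\in\mathbb{C}^{n\times n}$, the index $ind(A)$ is the smallest nonnegative integer $k$ with $\mathrm{rank}(A^k)=\mathrm{rank}(A^{k+1})$. $A\{1\}$ denotes the set of inner inverses of $A$, i.e. matrices $X$ with $AXA=A$. With $k=ind(A)$, $A\{GD\}$ denotes the set of G-Drazin inverses of $A$, i.e. matrices $X\in\mathbb{C}^{n\times n}$ with $AXA=A$, $XA^{k+1}=A^k$ and $A^{k+1}X=A^k$. $R(\cdot)$ and $N(\cdot)$ denote range and null space, and $P_{S,T}$ denotes the (oblique) projector onto the subspace $S$ along the subspace $T$. *)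

(* Complex matrices: C is an arbitrary numClosedFieldType
   (the complex numbers are an instance). Column-vector conventions. *)
From HB Require Import structures.
From mathcomp Require Import all_boot all_order all_algebra.
Set Implicit Arguments. Unset Strict Implicit. Unset Printing Implicit Defensive.
Import Order.TTheory GRing.Theory Num.Theory.
Local Open Scope ring_scope.

Section Defs.
Variables (C : numClosedFieldType) (n : nat).

(* ind(A): smallest k >= 0 with rank(A^k) = rank(A^(k+1)); such k <= n always
   exists, so searching in 0..n is exhaustive. *)
Definition ind (A : 'M[C]_n) : nat :=
  find (fun k => \rank (A ^+ k) == \rank (A ^+ k.+1)) (iota 0 n.+1).

Definition inner_inverse (A X : 'M[C]_n) : Prop := A *m X *m A = A.

Definition GDrazin_inverse (A X : 'M[C]_n) : Prop :=
  let k := ind A in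
  [/\ A *m X *m A = A, X *m A ^+ k.+1 = A ^+ k & A ^+ k.+1 *m X = A ^+ k].

Definition range (M : 'M[C]_n) (v : 'cV[C]_n) : Prop := exists w : 'cV[C]_n, v = M *m w.
Definition nullspace (M : 'M[C]_n) (v : 'cV[C]_n) : Prop := M *m v = 0.

Definition is_projector (X : 'M[C]_n) (S T : 'cV[C]_n -> Prop) : Prop :=
  [/\ (forall v, S v -> T v -> v = 0),
      (forall v, exists s t, [/\ S s, T t & v = s + t]),
      (forall v, S v -> X *m v = v) &
      (forall v, T v -> X *m v = 0)].
End Defs.

(* Both A A^- and A^GD A are idempotent because A^- and A^GD are inner
   inverses of A, and A^GD1 is built so that A A^GD1 = A A^- and
   A^GD1 A = A^GD A; everything then follows from the fact that an idempotent
   is the projector onto its range along its null space, together with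
   R(A A^-) = R(A) and N(A^GD A) = N(A). *)
From HB Require Import structures.
From mathcomp Require Import all_boot all_order all_algebra.
Import GRing.Theory.
Local Open Scope ring_scope.

Section InnerInverseProjectors.
Context {C : numClosedFieldType} {n : nat}.
Implicit Types A X P : 'M[C]_n.

Lemma inner_inverse_idemAX A X :
  inner_inverse A X -> A *m X *m (A *m X) = A *m X.
Proof. by move=> AXA; rewrite mulmxA AXA. Qed.

Lemma inner_inverse_idemXA A X :
  inner_inverse A X -> X *m A *m (X *m A) = X *m A.
Proof. by move=> AXA; rewrite -mulmxA (mulmxA A) AXA. Qed.

Lemma range_inner_inverse A X v :
  inner_inverse A X -> range (A *m X) v <-> range A v.
Proof.
move=> AXA; split=> [[w ->] | [w ->]].
- by exists (X *m w); rewrite mulmxA.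
- by exists (A *m w); rewrite mulmxA AXA.
Qed.

Lemma nullspace_inner_inverse A X v :
  inner_inverse A X -> nullspace (X *m A) v <-> nullspace A v.
Proof.
rewrite /nullspace => AXA; split=> [XAv0 | Av0].
- by rewrite -AXA -(mulmxA A X A) -mulmxA XAv0 mulmx0.
- by rewrite -mulmxA Av0 mulmx0.
Qed.

Lemma idempotent_projector P :
  P *m P = P -> is_projector P (range P) (nullspace P).
Proof.
rewrite /nullspace => PP; split.
- by move=> _ [w ->] PPw0; rewrite -PP -mulmxA PPw0.
- move=> v; exists (P *m v), (v - P *m v); split.
  + by exists v.
  + by rewrite mulmxBr mulmxA PP subrr.
  + by rewrite addrC subrK.
- by move=> _ [w ->]; rewrite mulmxA PP.
- by [].
Qed.

Lemma is_projector_eq {P} {S S' T T' : 'cV[C]_n -> Prop} :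
  is_projector P S T ->
  (forall v, S v <-> S' v) -> (forall v, T v <-> T' v) ->
  is_projector P S' T'.
Proof.
move=> [ST0 decST PS PT] eqS eqT; split.
- by move=> v /eqS Sv /eqT Tv; apply: ST0.
- move=> v; have [s [t [Ss Tt ->]]] := decST v.
  by exists s, t; split; [apply/eqS | apply/eqT |].
- by move=> v /eqS; apply: PS.
- by move=> v /eqT; apply: PT.
Qed.

End InnerInverseProjectors.

Theorem theorem2p3 (C : numClosedFieldType) (n : nat) (A Am Agd : 'M[C]_n) :
  inner_inverse A Am -> GDrazin_inverse A Agd ->
  let AGD1 := Agd *m A *m Am in
  [/\ (A *m AGD1 *m A = A /\ AGD1 *m A *m AGD1 = AGD1),
      (forall m : nat, (0 < m)%N ->
         A ^+ m *m AGD1 = A ^+ m *m Am /\ AGD1 *m A ^+ m = Agd *m A ^+ m),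
      is_projector (A *m AGD1) (range A) (nullspace (A *m Am)) &
      is_projector (AGD1 *m A) (range (Agd *m A)) (nullspace A)].
Proof.
move=> AmA [AgdA _ _] X.
have AX : A *m X = A *m Am by rewrite /X !mulmxA AgdA.
have XA : X *m A = Agd *m A by rewrite /X -!mulmxA (mulmxA A Am A) AmA.
split.
- split; first by rewrite AX AmA.
  by rewrite XA /X mulmxA (inner_inverse_idemXA _ _ AgdA).
- case=> [|m] // _; split.
  + by rewrite exprSr -mulmxE -!mulmxA AX.
  + by rewrite exprS -mulmxE !mulmxA XA.
- rewrite AX.
  apply: (is_projector_eq (idempotent_projector _ (inner_inverse_idemAX _ _ AmA))).
  + by move=> v; apply: range_inner_inverse.
  + by move=> v; exact: iff_refl.
- rewrite XA.
  apply: (is_projector_eq (idempotent_projector _ (inner_inverse_idemXA _ _ AgdA))).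
  + by move=> v; exact: iff_refl.
  + by move=> v; apply: nullspace_inner_inverse.
Qed.
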